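(* Fix $\xi\in[0,0.13]$ and let $y_i\in[\cos(2\pi/9),1)$ for all $i\in\{2,3,5,6\}$. Then for any $j\in\{2,3,5,6\}$ with $y_j,y_{j'}\le\cos(2\pi/10)$, one has $$\frac{\partial\psi_\xi}{\partial y_j}(\delta,y_2,y_3,y_5,y_6)\ge0\quad\text{and}\quad\frac{\partial\psi_\xi}{\partial y_{j'}}(\delta,y_2,y_3,y_5,y_6)\ge0$$ for all $\delta\in[0,0.13]$.
   Context: Pairing: $2'=6$, $3'=5$, $5'=3$, $6'=2$. For $\xi\ge0$, $y\in(0,1)$: $\eta_\xi(y)=\frac{-2-5y+(1+\xi)^2+\sqrt{(2+5y-(1+\xi)^2)^2+4(2+y)(1-y)(1+\xi)^2}}{2+y}$. Let $b(y)=\frac{16}{y+1}-7$, $c_n=\cos(2\pi/n)$, $\beta(y)=b(y)$ on $[c_{10},1]$ and $\beta(y)=\frac{(2-b(c_{10}))b(y)-(2-b(c_9))b(c_{10})}{b(c_9)-b(c_{10})}$ on $[c_9,c_{10}]$. Define $$G(\delta,\eta_2,\eta_3,\eta_5,\eta_6,\beta_2,\beta_3,\beta_5,\beta_6)=\frac{1+\dfrac{\delta[(1+\eta_2)(1+\eta_5)+(1+\eta_3)(1+\eta_6)]-2\delta(\delta+2)}{(2+\eta_2+\eta_6)(2+\eta_3+\eta_5)}}{\sqrt{1+\dfrac{\delta^2+2(1+\beta_2\beta_6)\delta}{(2+\eta_2+\eta_6)^2}}\sqrt{1+\dfrac{\delta^2+2(1+\beta_3\beta_5)\delta}{(2+\eta_3+\eta_5)^2}}}$$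 and $\psi_\xi(\delta,y_2,y_3,y_5,y_6)=G(\delta,\eta_\xi(y_2),\eta_\xi(y_3),\eta_\xi(y_5),\eta_\xi(y_6),\beta(y_2),\beta(y_3),\beta(y_5),\beta(y_6))$. *)

From Stdlib Require Import Reals.
From Coquelicot Require Import Coquelicot.
Open Scope R_scope.

Definition eta (xi y : R) : R :=
  (-2 - 5*y + (1+xi)^2
   + sqrt ((2 + 5*y - (1+xi)^2)^2 + 4*(2+y)*(1-y)*(1+xi)^2)) / (2 + y).

Definition b (y : R) : R := 16 / (y + 1) - 7.

Definition c (n : R) : R := cos (2 * PI / n).

(* beta: b on [c_10, 1], the affine-in-b formula on [c_9, c_10]
   (the two branches agree at c_10; outside [c_9,1] the value is irrelevant). *)
Definition beta (y : R) : R :=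
  if Rle_dec y (c 10) then
    ((2 - b (c 10)) * b y - (2 - b (c 9)) * b (c 10)) / (b (c 9) - b (c 10))
  else b y.

Definition G (d e2 e3 e5 e6 b2 b3 b5 b6 : R) : R :=
  (1 + (d * ((1+e2)*(1+e5) + (1+e3)*(1+e6)) - 2*d*(d+2))
        / ((2+e2+e6)*(2+e3+e5)))
  / (sqrt (1 + (d^2 + 2*(1+b2*b6)*d) / (2+e2+e6)^2)
     * sqrt (1 + (d^2 + 2*(1+b3*b5)*d) / (2+e3+e5)^2)).

Definition psi (xi d y2 y3 y5 y6 : R) : R :=
  G d (eta xi y2) (eta xi y3) (eta xi y5) (eta xi y6)
      (beta y2) (beta y3) (beta y5) (beta y6).

Definition valid_index (j : nat) : Prop := j = 2%nat \/ j = 3%nat \/ j = 5%nat \/ j = 6%nat.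

Definition pair_index (j : nat) : nat :=
  match j with 2 => 6 | 3 => 5 | 5 => 3 | 6 => 2 | _ => j end%nat.

Definition yval (j : nat) (y2 y3 y5 y6 : R) : R :=
  match j with 2 => y2 | 3 => y3 | 5 => y5 | _ => y6 end%nat.

Definition psi_coord (xi d y2 y3 y5 y6 : R) (j : nat) (t : R) : R :=
  psi xi d (if Nat.eqb j 2 then t else y2) (if Nat.eqb j 3 then t else y3)
           (if Nat.eqb j 5 then t else y5) (if Nat.eqb j 6 then t else y6).

Definition is_derive_within (D : R -> Prop) (f : R -> R) (x l : R) : Prop :=
  filterlim (fun t => (f t - f x) / (t - x))
            (within (fun t => D t /\ t <> x) (locally x)) (locally l).

(* Partial derivative of psi_xi in y_j, taken on the piece [c_9, c_10]
   where beta has the single (smooth) formula. *)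
Definition dpsi_nonneg (xi d y2 y3 y5 y6 : R) (j : nat) : Prop :=
  exists l, is_derive_within (fun t => c 9 <= t <= c 10)
              (psi_coord xi d y2 y3 y5 y6 j) (yval j y2 y3 y5 y6) l /\ 0 <= l.

From Stdlib Require Import Reals Lra Psatz.
From Coquelicot Require Import Coquelicot.
Open Scope R_scope.

(* By the symmetries of G, the coordinate y_j can be put in the first slot of G
   and y_j' in the last one, so that psi_xi depends on y_j only through the
   numerator N and the first radicand q of G, and d psi / d y_j has the sign of
   2 q N' - N q'.  On [c_9, c_10] the weight beta is affine in b, hence
   decreases with slope at most -3.2, whereas eta_xi decreases with slope at
   least -0.66.  With delta, xi and all the eta's in [0, 0.13] and
   beta(y_j), beta(y_j') in [1.843, 2], the contribution of beta' to - N q'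
   (at least 0.92 * 3.2 * 1.843 > 5.42, up to the common factor
   2 delta / (2 + eta_j + eta_j')^2) outweighs the whole contribution of eta'
   (at most 0.66 * 8.01 < 5.29). *)

Lemma PI_bounds : 3.1415 <= PI <= 3.1417.
Proof.
  destruct (PI_2_3_7_ineq 2) as [Hlo Hhi].
  unfold tg_alt, PI_2_3_7_tg, Ratan_seq in Hlo, Hhi; simpl in Hlo, Hhi.
  lra.
Qed.

Lemma cos_taylor_bounds a : 0 <= a <= 1 ->
  1 - a^2/2 + a^4/24 - a^6/720 <= cos a <= 1 - a^2/2 + a^4/24 - a^6/720 + a^8/40320.
Proof.
  intros Ha. pose proof PI_bounds.
  destruct (cos_bound a 1) as [Hlo Hhi]; try lra.
  unfold cos_approx, cos_term in Hlo, Hhi; cbn [sum_f_R0 Nat.mul Nat.add] in Hlo, Hhi.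
  assert (F : INR (Factorial.fact 0) = 1 /\ INR (Factorial.fact 2) = 2 /\
    INR (Factorial.fact 4) = 24 /\ INR (Factorial.fact 6) = 720 /\
    INR (Factorial.fact 8) = 40320)
    by (repeat split; rewrite INR_IZR_INZ; reflexivity).
  destruct F as (F0 & F2 & F4 & F6 & F8).
  rewrite F0, F2, F4, F6 in Hlo, Hhi; rewrite F8 in Hhi.
  split; lra.
Qed.

Lemma c9_bounds : 0.765 <= c 9 <= 0.767.
Proof.
  pose proof PI_bounds. unfold c. split.
  - apply Rle_trans with (cos 0.6982).
    + destruct (cos_taylor_bounds 0.6982); lra.
    + apply cos_decr_1; lra.
  - apply Rle_trans with (cos 0.698).
    + apply cos_decr_1; lra.
    + destruct (cos_taylor_bounds 0.698); lra.
Qed.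

Lemma c10_bounds : 0.808 <= c 10 <= 0.8091.
Proof.
  pose proof PI_bounds. unfold c. split.
  - apply Rle_trans with (cos 0.6284).
    + destruct (cos_taylor_bounds 0.6284); lra.
    + apply cos_decr_1; lra.
  - apply Rle_trans with (cos 0.6283).
    + apply cos_decr_1; lra.
    + destruct (cos_taylor_bounds 0.6283); lra.
Qed.

Section Eta.

Variables xi y : R.
Hypothesis Hxi : 0 <= xi <= 0.13.
Hypothesis Hy : 0.765 <= y < 1.

Let a := (1 + xi)^2.
Let p := 2 + 5*y - a.

Lemma eta_alt : eta xi y = (sqrt (p^2 + 4*(2+y)*(1-y)*a) - p) / (2 + y).
Proof. unfold eta, p, a, Rdiv. f_equal. ring. Qed.

Lemma eta_bounds : 0 <= eta xi y <= 0.13.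
Proof.
  rewrite eta_alt.
  assert (Ha : 1 <= a <= 1.2769) by (unfold a; nra).
  assert (Hpos : 0 <= (2+y)*(1-y)*a) by (repeat apply Rmult_le_pos; lra).
  assert (Hlo : p <= sqrt (p^2 + 4*(2+y)*(1-y)*a)).
  { rewrite <- (sqrt_pow2 p) at 1 by (unfold p; lra). apply sqrt_le_1_alt. lra. }
  assert (Hhi : sqrt (p^2 + 4*(2+y)*(1-y)*a) <= p + 0.13*(2+y)).
  { rewrite <- (sqrt_pow2 (p + 0.13*(2+y))) by (unfold p; lra).
    apply sqrt_le_1_alt.
    assert (4*(1-y)*a <= 0.26*p + 0.0169*(2+y)).
    { pose proof (Rmult_le_pos (1.2769 - a) (4.26 - 4*y) ltac:(lra) ltac:(lra)).
      unfold p; lra. }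
    nra. }
  split; [apply Rdiv_le_0_compat | rewrite Rle_div_l]; lra.
Qed.

(* eta xi y is the positive root of (2+y) X^2 + 2 p X = 4 (1-y) a, and
   (2+y) eta xi y + p is the square root of its discriminant: the slope is the
   one given by implicit differentiation. *)
Lemma is_derive_eta :
  is_derive (eta xi) y (- (eta xi y ^ 2 + 10 * eta xi y + 4 * a) / (2 * ((2+y) * eta xi y + p))).
Proof.
  assert (Ha : 1 <= a <= 1.2769) by (unfold a; nra).
  assert (Hpos : 0 < (2+y)*(1-y)*a) by (repeat apply Rmult_lt_0_compat; lra).
  pose proof (pow2_ge_0 p).
  rewrite eta_alt. set (D := p^2 + 4*(2+y)*(1-y)*a).
  assert (HD : 0 < D) by (unfold D; lra).
  unfold eta. auto_derive;
    repeat match goal with |- context [sqrt ?q] =>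
      lazymatch q with D => fail | _ => replace q with D by (unfold D, p, a; ring) end end.
  - replace (_ * (_ * 1) + _) with D by (unfold D, p, a; ring). lra.
  - pose proof (sqrt_sqrt D (Rlt_le _ _ HD)) as Hs.
    pose proof (sqrt_lt_R0 D HD) as Hs0.
    set (s := sqrt D) in *.
    match goal with |- ?L = ?R =>
      enough (L - R = (D - s * s) / (2 * s * (2+y)^2)) as E
        by (rewrite Hs, Rminus_diag, Rdiv_0_l in E; lra) end.
    unfold D, p, a. field. lra.
Qed.

Lemma eta_slope_ge : exists e1, is_derive (eta xi) y e1 /\ -0.66 <= e1.
Proof.
  eexists; split; [apply is_derive_eta|].
  destruct eta_bounds as [He0 He1]; set (e := eta xi y) in *.
  assert (Ha : 1 <= a <= 1.2769) by (unfold a; nra).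
  assert (e * y >= 0.765 * e) by nra.
  assert (e ^ 2 <= 0.13 * e) by nra.
  rewrite <- Rle_div_r by (unfold p; lra). unfold p; lra.
Qed.

End Eta.

Lemma b_decreasing y z : -1 < y -> y <= z -> b z <= b y.
Proof.
  intros Hy Hyz. unfold b.
  enough (16 / (z + 1) <= 16 / (y + 1)) by lra.
  apply Rmult_le_compat_l; [lra|]. apply Rinv_le_contravar; lra.
Qed.

Lemma b9_bounds : 2.054 <= b (c 9) <= 2.066.
Proof.
  pose proof c9_bounds. unfold b.
  enough (9.054 <= 16 / (c 9 + 1) <= 9.066) by lra.
  split; [rewrite <- Rle_div_r | rewrite Rle_div_l]; lra.
Qed.

Lemma b10_bounds : 1.844 <= b (c 10) <= 1.85.
Proof.
  pose proof c10_bounds. unfold b.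
  enough (8.844 <= 16 / (c 10 + 1) <= 8.85) by lra.
  split; [rewrite <- Rle_div_r | rewrite Rle_div_l]; lra.
Qed.

Definition beta_low (t : R) : R :=
  ((2 - b (c 10)) * b t - (2 - b (c 9)) * b (c 10)) / (b (c 9) - b (c 10)).

Lemma beta_eq_low t : t <= c 10 -> beta t = beta_low t.
Proof. intros Ht. unfold beta. destruct (Rle_dec t (c 10)); [reflexivity | contradiction]. Qed.

Lemma beta_low_bounds t : c 9 <= t <= c 10 -> 1.843 <= beta_low t <= 2.
Proof.
  intros Ht. pose proof b9_bounds. pose proof b10_bounds. pose proof c9_bounds.
  assert (b (c 10) <= b t <= b (c 9)) by (split; apply b_decreasing; lra).
  unfold beta_low. split; [rewrite <- Rle_div_r | rewrite Rle_div_l]; nra.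
Qed.

Lemma beta_low_slope_le t : c 9 <= t <= c 10 ->
  exists L1, is_derive beta_low t L1 /\ L1 <= -3.2.
Proof.
  intros Ht. pose proof b9_bounds. pose proof b10_bounds. pose proof c9_bounds. pose proof c10_bounds.
  exists (- (16 * (2 - b (c 10))) / ((t+1)^2 * (b (c 9) - b (c 10)))). split.
  - unfold beta_low. set (b9 := b (c 9)) in *. set (b10 := b (c 10)) in *. clearbody b9 b10.
    unfold b. auto_derive; [lra|]. field. split; lra.
  - rewrite Rle_div_l by (apply Rmult_lt_0_compat; nra). nra.
Qed.

Lemma beta_nonneg y : c 9 <= y < 1 -> 0 <= beta y.
Proof.
  intros Hy. pose proof c9_bounds. unfold beta.
  destruct (Rle_dec y (c 10)).
  - pose proof (beta_low_bounds y ltac:(lra)). unfold beta_low in *. lra.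
  - unfold b. enough (8 <= 16 / (y + 1)) by lra. rewrite <- Rle_div_r; lra.
Qed.

Definition G_num (d e2 e3 e5 e6 : R) : R :=
  1 + (d * ((1+e2)*(1+e5) + (1+e3)*(1+e6)) - 2*d*(d+2)) / ((2+e2+e6)*(2+e3+e5)).

Definition G_rad (d e e' bb : R) : R := 1 + (d^2 + 2*(1+bb)*d) / (2+e+e')^2.

Lemma G_split d e2 e3 e5 e6 b2 b3 b5 b6 :
  G d e2 e3 e5 e6 b2 b3 b5 b6 =
  G_num d e2 e3 e5 e6 / (sqrt (G_rad d e2 e6 (b2*b6)) * sqrt (G_rad d e3 e5 (b3*b5))).
Proof. reflexivity. Qed.

Lemma G_swap_pairs d e2 e3 e5 e6 b2 b3 b5 b6 :
  G d e2 e3 e5 e6 b2 b3 b5 b6 = G d e6 e5 e3 e2 b6 b5 b3 b2.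
Proof.
  unfold G.
  replace (2 + e6 + e2) with (2 + e2 + e6) by ring.
  replace (2 + e5 + e3) with (2 + e3 + e5) by ring.
  replace ((1 + e6) * (1 + e3) + (1 + e5) * (1 + e2))
    with ((1 + e2) * (1 + e5) + (1 + e3) * (1 + e6)) by ring.
  rewrite (Rmult_comm b6 b2), (Rmult_comm b5 b3). reflexivity.
Qed.

Lemma G_swap_factors d e2 e3 e5 e6 b2 b3 b5 b6 :
  G d e2 e3 e5 e6 b2 b3 b5 b6 = G d e3 e2 e6 e5 b3 b2 b6 b5.
Proof.
  rewrite !G_split. unfold G_num.
  replace ((1 + e3) * (1 + e6) + (1 + e2) * (1 + e5))
    with ((1 + e2) * (1 + e5) + (1 + e3) * (1 + e6)) by ring.
  rewrite (Rmult_comm (2 + e3 + e5)), (Rmult_comm (sqrt (G_rad d e3 e5 (b3 * b5)))).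
  reflexivity.
Qed.

Lemma is_derive_div_sqrt (n q : R -> R) (k x n1 q1 : R) :
  is_derive n x n1 -> is_derive q x q1 -> 0 < q x -> 0 < k ->
  is_derive (fun t => n t / (sqrt (q t) * k)) x
    ((2 * q x * n1 - n x * q1) / (2 * q x * sqrt (q x) * k)).
Proof.
  intros Dn Dq Hq Hk.
  pose proof (sqrt_lt_R0 _ Hq) as Hs.
  auto_derive.
  - repeat split; [exists n1 | exists q1 | lra | apply Rgt_not_eq, Rmult_lt_0_compat]; assumption.
  - replace (Derive (fun t => n t) x) with n1 by (symmetry; apply is_derive_unique, Dn).
    replace (Derive (fun t => q t) x) with q1 by (symmetry; apply is_derive_unique, Dq).
    pose proof (sqrt_sqrt _ (Rlt_le _ _ Hq)) as Hss.
    set (s := sqrt (q x)) in *. rewrite <- Hss. field. lra.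
Qed.

Lemma is_derive_G_num (e : R -> R) x e1 d e3 e5 e6 :
  is_derive e x e1 -> 0 < 2 + e x + e6 -> 0 < 2 + e3 + e5 ->
  is_derive (fun t => G_num d (e t) e3 e5 e6) x
    (e1 * (d * ((1+e6)*(e5-e3) + 2*d + 4) / ((2 + e x + e6)^2 * (2+e3+e5)))).
Proof.
  intros De HA HB. unfold G_num. auto_derive.
  - repeat split; try (exists e1; exact De). apply Rgt_not_eq, Rmult_lt_0_compat; lra.
  - replace (Derive (fun t => e t) x) with e1 by (symmetry; apply is_derive_unique, De).
    field. lra.
Qed.

Lemma is_derive_G_rad (e L : R -> R) x e1 L1 d e6 b6 :
  is_derive e x e1 -> is_derive L x L1 -> 0 < 2 + e x + e6 ->
  is_derive (fun t => G_rad d (e t) e6 (L t * b6)) x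
    (2 * d / (2 + e x + e6)^2 * (L1 * b6 - (d + 2*(1 + L x * b6)) * e1 / (2 + e x + e6))).
Proof.
  intros De DL HA. unfold G_rad. auto_derive.
  - repeat split; try (exists e1; exact De); try (exists L1; exact DL).
    apply Rgt_not_eq, Rmult_lt_0_compat; lra.
  - replace (Derive (fun t => e t) x) with e1 by (symmetry; apply is_derive_unique, De).
    replace (Derive (fun t => L t) x) with L1 by (symmetry; apply is_derive_unique, DL).
    field. lra.
Qed.

Lemma G_num_bounds d e2 e3 e5 e6 :
  0 <= d <= 0.13 -> 0 <= e2 <= 0.13 -> 0 <= e3 <= 0.13 -> 0 <= e5 <= 0.13 -> 0 <= e6 <= 0.13 ->
  0.92 <= G_num d e2 e3 e5 e6 <= 1.
Proof.
  intros Hd H2 H3 H5 H6. unfold G_num.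
  set (P := (1+e2)*(1+e5) + (1+e3)*(1+e6)).
  assert (HP : 2 <= P <= 2.6) by (unfold P; nra).
  assert (HAB : 4 <= (2+e2+e6)*(2+e3+e5)) by nra.
  enough (-0.08 <= (d * P - 2*d*(d+2)) / ((2+e2+e6)*(2+e3+e5)) <= 0) by lra.
  split; [rewrite <- Rle_div_r | rewrite Rle_div_l]; nra.
Qed.

Lemma G_rad_ge_1 d e e' bb : 0 <= d -> 0 <= bb -> 0 < 2 + e + e' -> 1 <= G_rad d e e' bb.
Proof.
  intros Hd Hbb HA. unfold G_rad.
  enough (0 <= (d^2 + 2*(1+bb)*d) / (2+e+e')^2) by lra.
  apply Rdiv_le_0_compat; nra.
Qed.

Lemma G_rad_le d e e' bb :
  0 <= d <= 0.13 -> 0 <= e -> 0 <= e' -> bb <= 4 -> G_rad d e e' bb <= 1.33.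
Proof.
  intros Hd He He' Hbb. unfold G_rad.
  enough ((d^2 + 2*(1+bb)*d) / (2+e+e')^2 <= 0.33) by lra.
  rewrite Rle_div_l by nra. nra.
Qed.

Lemma slope_balance q n M B Y A e1 L1 b6 :
  1 <= q <= 1.33 -> 0.92 <= n <= 1 -> 0 <= M <= 4.42 -> 2 <= B -> 0 <= Y <= 10.13 -> 2 <= A ->
  -0.66 <= e1 -> L1 <= -3.2 -> 1.843 <= b6 ->
  0 <= q * (M * e1 / B) - n * (L1 * b6 - Y * e1 / A).
Proof.
  intros Hq Hn HM HB HY HA He1 HL1 Hb6.
  assert (Hu : 0 <= M / B <= 2.21) by (split; [apply Rdiv_le_0_compat | rewrite Rle_div_l]; lra).
  assert (Hv : 0 <= Y / A <= 5.065) by (split; [apply Rdiv_le_0_compat | rewrite Rle_div_l]; lra).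
  replace (q * (M * e1 / B) - n * (L1 * b6 - Y * e1 / A))
    with (e1 * (q * (M / B) + n * (Y / A)) - n * L1 * b6) by (field; lra).
  assert (0 <= q * (M / B) + n * (Y / A) <= 8.01) by nra.
  assert (2.944 <= n * - L1) by nra.
  assert (5.42 <= - n * L1 * b6) by nra.
  nra.
Qed.

Lemma G_first_slot_slope_nonneg (e L : R -> R) x e1 L1 d e3 e5 e6 b3 b5 b6 :
  0 <= d <= 0.13 -> 0 <= e x <= 0.13 -> 0 <= e3 <= 0.13 -> 0 <= e5 <= 0.13 -> 0 <= e6 <= 0.13 ->
  1.843 <= L x <= 2 -> 1.843 <= b6 <= 2 -> 0 <= b3 -> 0 <= b5 ->
  is_derive e x e1 -> -0.66 <= e1 -> is_derive L x L1 -> L1 <= -3.2 ->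
  exists l, is_derive (fun t => G d (e t) e3 e5 e6 (L t) b3 b5 b6) x l /\ 0 <= l.
Proof.
  intros Hd He He3 He5 He6 HL Hb6 Hb3 Hb5 De He1 DL HL1.
  assert (Hq : 1 <= G_rad d (e x) e6 (L x * b6) <= 1.33).
  { split; [apply G_rad_ge_1 | apply G_rad_le]; try split; nra. }
  assert (Hk : 0 < sqrt (G_rad d e3 e5 (b3 * b5))).
  { apply sqrt_lt_R0. assert (1 <= G_rad d e3 e5 (b3 * b5)) by (apply G_rad_ge_1; nra). lra. }
  eexists; split.
  - apply (is_derive_ext (fun t => G_num d (e t) e3 e5 e6 /
             (sqrt (G_rad d (e t) e6 (L t * b6)) * sqrt (G_rad d e3 e5 (b3 * b5))))); [reflexivity|].
    apply is_derive_div_sqrt; [apply (is_derive_G_num e x e1) | apply (is_derive_G_rad e L x e1 L1) | |];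
      cbv beta; (assumption || lra).
  - cbv beta.
    pose proof (G_num_bounds d (e x) e3 e5 e6 Hd He He3 He5 He6) as Hn.
    set (q := G_rad d (e x) e6 (L x * b6)) in *. set (n := G_num d (e x) e3 e5 e6) in *.
    set (A := 2 + e x + e6). set (B := 2 + e3 + e5).
    set (M := (1 + e6) * (e5 - e3) + 2 * d + 4). set (Y := d + 2 * (1 + L x * b6)).
    apply Rdiv_le_0_compat.
    2: { pose proof (sqrt_lt_R0 q ltac:(lra)). repeat apply Rmult_lt_0_compat; lra. }
    replace (2 * q * (e1 * (d * M / (A ^ 2 * B))) - n * (2 * d / A ^ 2 * (L1 * b6 - Y * e1 / A)))
      with (2 * d / A ^ 2 * (q * (M * e1 / B) - n * (L1 * b6 - Y * e1 / A)))
      by (unfold A, B; field; lra).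
    apply Rmult_le_pos; [apply Rdiv_le_0_compat; unfold A; nra |].
    apply slope_balance; unfold M, B, Y, A; nra.
Qed.

Lemma is_derive_within_of_agree (D : R -> Prop) (f g : R -> R) (x l : R) :
  (forall t, D t -> f t = g t) -> D x -> is_derive g x l -> is_derive_within D f x l.
Proof.
  intros Hfg Hx Dg. apply is_derive_Reals in Dg.
  unfold is_derive_within. apply filterlim_locally. intros eps.
  destruct (Dg eps (cond_pos eps)) as [delta Hdelta].
  exists delta. intros t Ht [HDt Hne]. change R in t.
  rewrite (Hfg t HDt), (Hfg x Hx).
  assert (Hh : t - x <> 0) by lra.
  specialize (Hdelta (t - x) Hh Ht).
  replace (x + (t - x)) with t in Hdelta by ring.
  exact Hdelta.
Qed.

Lemma first_slot_derive_within_nonneg xi d x (f : R -> R) e3 e5 e6 b3 b5 b6 :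
  0 <= xi <= 0.13 -> 0 <= d <= 0.13 -> c 9 <= x <= c 10 ->
  0 <= e3 <= 0.13 -> 0 <= e5 <= 0.13 -> 0 <= e6 <= 0.13 ->
  1.843 <= b6 <= 2 -> 0 <= b3 -> 0 <= b5 ->
  (forall t, c 9 <= t <= c 10 -> f t = G d (eta xi t) e3 e5 e6 (beta_low t) b3 b5 b6) ->
  exists l, is_derive_within (fun t => c 9 <= t <= c 10) f x l /\ 0 <= l.
Proof.
  intros Hxi Hd Hx He3 He5 He6 Hb6 Hb3 Hb5 Hf.
  pose proof c9_bounds. pose proof c10_bounds.
  destruct (eta_slope_ge xi x Hxi ltac:(lra)) as (e1 & De & He1).
  destruct (beta_low_slope_le x Hx) as (L1 & DL & HL1).
  destruct (G_first_slot_slope_nonneg (eta xi) beta_low x e1 L1 d e3 e5 e6 b3 b5 b6)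
    as (l & Dl & Hl); try assumption.
  - apply eta_bounds; lra.
  - apply beta_low_bounds, Hx.
  - exists l. split; [|exact Hl]. exact (is_derive_within_of_agree _ _ _ x l Hf Hx Dl).
Qed.

Lemma psi_coord_first_slot xi d y2 y3 y5 y6 j : valid_index j ->
  exists i3 i5, valid_index i3 /\ valid_index i5 /\
  forall t, psi_coord xi d y2 y3 y5 y6 j t =
    G d (eta xi t) (eta xi (yval i3 y2 y3 y5 y6)) (eta xi (yval i5 y2 y3 y5 y6))
        (eta xi (yval (pair_index j) y2 y3 y5 y6))
        (beta t) (beta (yval i3 y2 y3 y5 y6)) (beta (yval i5 y2 y3 y5 y6))
        (beta (yval (pair_index j) y2 y3 y5 y6)).
Proof.
  unfold valid_index.
  intros [-> | [-> | [-> | ->]]];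
    [exists 3%nat, 5%nat | exists 2%nat, 6%nat | exists 6%nat, 2%nat | exists 5%nat, 3%nat];
    (split; [tauto | split; [tauto | intro t; unfold psi_coord, psi; cbn]]).
  - reflexivity.
  - apply G_swap_factors.
  - rewrite G_swap_factors. apply G_swap_pairs.
  - apply G_swap_pairs.
Qed.

Lemma valid_pair_index j : valid_index j -> valid_index (pair_index j).
Proof. unfold valid_index. intros [-> | [-> | [-> | ->]]]; cbn; tauto. Qed.

Lemma pair_index_involutive j : valid_index j -> pair_index (pair_index j) = j.
Proof. intros [-> | [-> | [-> | ->]]]; reflexivity. Qed.

Lemma dpsi_nonneg_of_le_c10 xi d y2 y3 y5 y6 j :
  0 <= xi <= 0.13 -> 0 <= d <= 0.13 ->
  (forall i, valid_index i -> c 9 <= yval i y2 y3 y5 y6 < 1) ->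
  valid_index j -> yval j y2 y3 y5 y6 <= c 10 -> yval (pair_index j) y2 y3 y5 y6 <= c 10 ->
  dpsi_nonneg xi d y2 y3 y5 y6 j.
Proof.
  intros Hxi Hd Hy Hj Hyj Hyj'.
  pose proof c9_bounds.
  destruct (psi_coord_first_slot xi d y2 y3 y5 y6 j Hj) as (i3 & i5 & Hi3 & Hi5 & Hpsi).
  pose proof (Hy i3 Hi3). pose proof (Hy i5 Hi5). pose proof (Hy j Hj).
  pose proof (Hy _ (valid_pair_index j Hj)).
  set (u3 := yval i3 y2 y3 y5 y6) in *. set (u5 := yval i5 y2 y3 y5 y6) in *.
  set (u6 := yval (pair_index j) y2 y3 y5 y6) in *.
  apply (first_slot_derive_within_nonneg xi d _ _
           (eta xi u3) (eta xi u5) (eta xi u6) (beta u3) (beta u5) (beta u6)); try lra.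
  - apply eta_bounds; lra.
  - apply eta_bounds; lra.
  - apply eta_bounds; lra.
  - rewrite beta_eq_low by lra. apply beta_low_bounds; lra.
  - apply beta_nonneg; lra.
  - apply beta_nonneg; lra.
  - intros t Ht. rewrite Hpsi, beta_eq_low by lra. reflexivity.
Qed.

Theorem lemma4p4 :
  forall xi y2 y3 y5 y6 : R,
    0 <= xi <= 0.13 ->
    c 9 <= y2 < 1 -> c 9 <= y3 < 1 -> c 9 <= y5 < 1 -> c 9 <= y6 < 1 ->
    forall j : nat, valid_index j ->
      yval j y2 y3 y5 y6 <= c 10 ->
      yval (pair_index j) y2 y3 y5 y6 <= c 10 ->
      forall d : R, 0 <= d <= 0.13 ->
        dpsi_nonneg xi d y2 y3 y5 y6 j /\
        dpsi_nonneg xi d y2 y3 y5 y6 (pair_index j).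
Proof.
  intros xi y2 y3 y5 y6 Hxi H2 H3 H5 H6 j Hj Hyj Hyj' d Hd.
  assert (Hy : forall i, valid_index i -> c 9 <= yval i y2 y3 y5 y6 < 1)
    by (intros i [-> | [-> | [-> | ->]]]; assumption).
  split; apply dpsi_nonneg_of_le_c10; auto using valid_pair_index.
  rewrite pair_index_involutive; assumption.
Qed.
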